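(* Let $K, T \geq 1$ be integers, let $r_{tk}$ ($t = 1,\ldots,T$, $k = 1,\ldots,K$) be real numbers (the return of security $k$ at time $t$), and let $H_1,\ldots,H_K > 0$ be thresholds. For each security $k$ and time $t$, classify the observation $r_{tk}$ as $U$ (up) if $r_{tk} \geq H_k$, as $D$ (down) if $r_{tk} \leq -H_k$, and as $N$ (neutral) if $-H_k < r_{tk} < H_k$. For $p,q \in \{U,N,D\}$ and securities $i,j$, let $n_{ij}^{pq}$ be the number of times $t \in \{1,\ldots,T\}$ at which $r_{ti}$ is in category $p$ and $r_{tj}$ is in category $q$. Assume that for every $i,j$ the quantities $$n_{ij}^{(A)} = n_{ij}^{UU} + n_{ij}^{UN} + n_{ij}^{UD} + n_{ij}^{DU} + n_{ij}^{DN} + n_{ij}^{DD}, \qquad n_{ij}^{(B)} = n_{ij}^{UU} + n_{ij}^{NU} + n_{ij}^{DU} + n_{ij}^{UD} + n_{ij}^{ND} + n_{ij}^{DD}$$ are positive (equivalently, every security is in category $U$ or $D$ at least once). Define the $K\times K$ matrix $G^{(1)}$ with entries $$g_{ij}^{(1)} = \frac{n_{ij}^{UU} + n_{ij}^{DD} - n_{ij}^{UD} - n_{ij}^{DU}}{\sqrt{n_{ij}^{(A)}\, n_{ij}^{(B)}}}.$$ Then $G^{(1)}$ is positive semidefinite.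
   Context: In the paper the thresholds are $H_k = c\,\sigma_k$, where $c>0$ is a fixed fraction (e.g. $1/2$) and $\sigma_k$ is the sample standard deviation of the returns of security $k$; the result only uses that the thresholds are positive. The matrix $G^{(1)}$ is called Gerber Statistic 1. *)

From HB Require Import structures.
From mathcomp Require Import all_boot all_order all_algebra.
From mathcomp Require Import reals.
Set Implicit Arguments. Unset Strict Implicit. Unset Printing Implicit Defensive.
Import Order.TTheory GRing.Theory Num.Theory.
Local Open Scope ring_scope.

Inductive cat := CU | CN | CD.

Definition cat_eqb (a b : cat) : bool :=
  match a, b with CU, CU | CN, CN | CD, CD => true | _, _ => false end.
Lemma cat_eqP : Equality.axiom cat_eqb.
Proof. by case; case; constructor. Qed.
HB.instance Definition _ := hasDecEq.Build cat cat_eqP.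

Section Gerber.
Variable R : realType.

Definition categ (x h : R) : cat :=
  if h <= x then CU else if x <= - h then CD else CN.

Variables (T K : nat) (r : 'M[R]_(T, K)) (H : 'I_K -> R).

Definition ncount (i j : 'I_K) (p q : cat) : nat :=
  #|[set t : 'I_T | (categ (r t i) (H i) == p) && (categ (r t j) (H j) == q)]|.

Definition nA (i j : 'I_K) : nat :=
  (ncount i j CU CU + ncount i j CU CN + ncount i j CU CD
   + ncount i j CD CU + ncount i j CD CN + ncount i j CD CD)%N.

Definition nB (i j : 'I_K) : nat :=
  (ncount i j CU CU + ncount i j CN CU + ncount i j CD CU
   + ncount i j CU CD + ncount i j CN CD + ncount i j CD CD)%N.

Definition gerber1 : 'M[R]_K :=
  \matrix_(i, j)
    (((ncount i j CU CU)%:R + (ncount i j CD CD)%:R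
      - (ncount i j CU CD)%:R - (ncount i j CD CU)%:R)
     / Num.sqrt ((nA i j)%:R * (nB i j)%:R)).

End Gerber.

Definition psd (R : realType) (n : nat) (M : 'M[R]_n) : Prop :=
  M^T = M /\ forall x : 'cV[R]_n, 0 <= (x^T *m M *m x) 0 0.

From Pilot Require Import Defs.
From HB Require Import structures.
From mathcomp Require Import all_boot all_order all_algebra.
From mathcomp Require Import reals.
Set Implicit Arguments. Unset Strict Implicit. Unset Printing Implicit Defensive.
Import Order.TTheory GRing.Theory Num.Theory.
Local Open Scope ring_scope.

(* Encode the categories as signs U = 1, N = 0, D = -1 and let S be the T x K
   sign matrix.  Then n^UU + n^DD - n^UD - n^DU is the inner product of
   columns i and j of S, while n^(A) and n^(B) are the squared norms of
   columns i and j.  Hence G^(1) is the matrix of cosines between the columns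
   of S, i.e. the Gram matrix of the normalised columns, and Gram matrices
   are positive semidefinite. *)

Lemma psd_gram (R : realType) (m n : nat) (M : 'M[R]_(m, n)) : psd (M^T *m M).
Proof.
split; first by rewrite trmx_mul trmxK.
move=> x; have -> : x^T *m (M^T *m M) *m x = (M *m x)^T *m (M *m x).
  by rewrite trmx_mul !mulmxA.
rewrite mxE.
by apply: sumr_ge0 => t _; rewrite mxE -expr2 sqr_ge0.
Qed.

Section CosineMatrix.
Variables (R : rcfType) (m n : nat) (S : 'M[R]_(m, n)).

Definition cosmx : 'M[R]_n :=
  \matrix_(i, j) ((S^T *m S) i j / Num.sqrt ((S^T *m S) i i * (S^T *m S) j j)).

Definition col_normalize : 'M[R]_(m, n) :=
  \matrix_(t, k) (S t k / Num.sqrt ((S^T *m S) k k)).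

Lemma gram_diag_ge0 k : 0 <= (S^T *m S) k k.
Proof. by rewrite mxE; apply: sumr_ge0 => t _; rewrite mxE -expr2 sqr_ge0. Qed.

Lemma cosmx_gram : cosmx = col_normalize^T *m col_normalize.
Proof.
apply/matrixP => i j; rewrite mxE sqrtrM ?gram_diag_ge0 //.
rewrite [in LHS]mxE mulr_suml [in RHS]mxE.
by apply: eq_bigr => t _; rewrite !mxE invfM mulrACA.
Qed.

End CosineMatrix.

Lemma psd_cosmx (R : realType) (m n : nat) (S : 'M[R]_(m, n)) : psd (cosmx S).
Proof. by rewrite cosmx_gram; apply: psd_gram. Qed.

Definition cat_sign (R : pzRingType) (c : Defs.cat) : R :=
  match c with CU => 1 | CN => 0 | CD => -1 end.

Section GerberSign.
Variables (R : realType) (T K : nat) (r : 'M[R]_(T, K)) (H : 'I_K -> R).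

Definition signmx : 'M[R]_(T, K) := \matrix_(t, k) cat_sign R (categ (r t k) (H k)).

Let c t k := categ (r t k) (H k).

Lemma ncountE i j p q :
  (ncount r H i j p q)%:R = \sum_t ((c t i == p) && (c t j == q))%:R :> R.
Proof.
rewrite /ncount -sum1_card natr_sum big_mkcond /=.
by apply: eq_bigr => t _; rewrite inE; case: (_ && _).
Qed.

Lemma signmx_gramE i j :
  (signmx^T *m signmx) i j = \sum_t cat_sign R (c t i) * cat_sign R (c t j).
Proof. by rewrite mxE; apply: eq_bigr => t _; rewrite !mxE. Qed.

Lemma gerber_numE i j :
  (ncount r H i j CU CU)%:R + (ncount r H i j CD CD)%:R
    - (ncount r H i j CU CD)%:R - (ncount r H i j CD CU)%:R
  = (signmx^T *m signmx) i j.
Proof.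
rewrite signmx_gramE !ncountE -big_split -!sumrB /=; apply: eq_bigr => t _.
by case: (c t i); case: (c t j); rewrite /= ?mul1r ?mulr1 ?mulr0 ?mul0r
  ?mulN1r ?opprK ?subr0 ?sub0r ?add0r ?addr0 ?oppr0.
Qed.

Lemma nAE i j : (nA r H i j)%:R = (signmx^T *m signmx) i i.
Proof.
rewrite signmx_gramE /nA !natrD !ncountE -!big_split /=; apply: eq_bigr => t _.
by case: (c t i); case: (c t j); rewrite /= ?mul1r ?mulr0 ?mulN1r ?opprK
  ?add0r ?addr0.
Qed.

Lemma nBE i j : (nB r H i j)%:R = (signmx^T *m signmx) j j.
Proof.
rewrite signmx_gramE /nB !natrD !ncountE -!big_split /=; apply: eq_bigr => t _.
by case: (c t i); case: (c t j); rewrite /= ?mul1r ?mulr0 ?mulN1r ?opprK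
  ?add0r ?addr0.
Qed.

Lemma gerber1_cosmx : gerber1 r H = cosmx signmx.
Proof. by apply/matrixP => i j; rewrite [LHS]mxE [RHS]mxE gerber_numE nAE nBE. Qed.

End GerberSign.

Theorem proposition1 (R : realType) (K T : nat) (hK : (0 < K)%N) (hT : (0 < T)%N)
    (r : 'M[R]_(T, K)) (H : 'I_K -> R) (hH : forall k, 0 < H k)
    (hA : forall i j, (0 < nA r H i j)%N) (hB : forall i j, (0 < nB r H i j)%N) :
  psd (gerber1 r H).
Proof. by rewrite gerber1_cosmx; apply: psd_cosmx. Qed.
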